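(* Let $f(\mathbf z)$ be a weighted homogeneous polynomial in $\mathbf z=(z_1,\dots,z_n)$ with strictly positive weight vector $R=(r_1,\dots,r_n)$ and degree $d(R)>0$, which is non-degenerate, Łojasiewicz non-degenerate, has an isolated singularity at the origin, and satisfies $\dim\Gamma(f)=n-1$. Then $\ell_0(f)\le\eta(R)=d(R)/\min_ir_i-1$.
   Context: $f$ is weighted homogeneous with weight $R$ and degree $d(R)$ if every monomial $\mathbf z^\nu$ with non-zero coefficient satisfies $\sum_ir_i\nu_i=d(R)$. $\Gamma_+(g)$ is the convex hull of $\bigcup_{c_\nu\ne0}(\nu+\mathbb R_{\ge0}^n)$ for $g=\sum c_\nu\mathbf z^\nu$; $\Gamma(g)$ is the union of compact faces. For a weight $P$, $g_P$ is the sum of terms of $g$ whose exponents lie on the face of $\Gamma_+(g)$ where $\nu\mapsto\sum p_i\nu_i$ is minimal. $f$ is non-degenerate if for each strictly positive $P$, $f_P$ has no critical point in $(\mathbb C^* )^n$. $\ell_0(f)$ is the infimum of $\theta>0$ with $\|\partial f(\mathbf z)\|\ge c\|\mathbf z\|^\theta$ near $\mathbf 0$ for some $c>0$, $\partial f=(f_1,\dots,f_n)$, $f_i=\partial f/\partial z_i$. Łojasiewicz non-degeneracy: for $I\subset\{1,\dots,n\}$ with $f|_{\mathbb C^I}\equiv0$, where $\mathbb C^I=\{\mathbf z:z_k=0,\ k\notin I\}$ (a vanishing coordinate subspace), and $i\in I$, let $J_i$ be the set of $j\notin I$ such that some monomial $z_i^az_j$ ($a\ge1$) has a non-zero coefficient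 in $f$. $f$ is Łojasiewicz non-degenerate if for every vanishing coordinate subspace $\mathbb C^I$, every $P=(p_i)_{i\in I}$ with all $p_i>0$, and every $\mathbf a\in(\mathbb C^* )^I$, there is $j\in\bigcup_{i\in I'}J_i$, $I'=\{i\in I:p_i=\min_{k\in I}p_k\}$, with $((f_j)^I)_P(\mathbf a)\ne0$; here $(f_j)^I$ is the restriction of $f_j$ to $\mathbb C^I$ as a polynomial in $(z_i)_{i\in I}$ and $(\cdot)_P$ its face function with respect to $P$. *)

From HB Require Import structures.
From mathcomp Require Import all_boot all_order all_algebra.
From mathcomp Require Import mpoly.
From mathcomp Require Import all_classical all_reals all_analysis.
From mathcomp Require Import complex.
Set Implicit Arguments. Unset Strict Implicit. Unset Printing Implicit Defensive.
Import Order.TTheory GRing.Theory Num.Theory.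
Import numFieldNormedType.Exports.
Local Open Scope classical_set_scope.
Local Open Scope ring_scope.

Section Defs.
Variables (R : realType) (n : nat).
Local Notation C := (R[i]).
Local Notation poly := (mpoly.mpoly n C).
Local Notation mnm := (mpoly.multinom n).

Definition cvec_norm (z : 'I_n -> C) : R :=
  Num.sqrt (\sum_(i < n) ((complex.Re (z i)) ^+ 2 + (complex.Im (z i)) ^+ 2)).

Definition grad_at (f : poly) (z : 'I_n -> C) : 'I_n -> C :=
  fun i => mpoly.meval z (mpoly.mderiv i f).
Definition gnorm (f : poly) (z : 'I_n -> C) : R := cvec_norm (grad_at f z).

Definition weighted_homogeneous (r : 'I_n -> R) (d : R) (f : poly) : Prop :=
  forall m : mnm, m \in mpoly.msupp f -> \sum_(i < n) r i * ((m i)%:R) = d.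

(* min_i r_i (for n >= 1; the seed max_i r_i does not change the min) *)
Definition min_weight_r (r : 'I_n -> R) : R :=
  \big[Num.min/ \big[Num.max/0]_(i < n) r i]_(i < n) r i.

Definition expv (m : mnm) : 'rV[R]_n := \row_(i < n) ((m i)%:R).
Definition dotw (P : 'I_n -> R) (x : 'rV[R]_n) : R := \sum_(i < n) P i * x ord0 i.

Definition conv_hull (S : set 'rV[R]_n) : set 'rV[R]_n :=
  [set x | exists k (w : 'I_k -> R) (p : 'I_k -> 'rV[R]_n),
     [/\ (forall j, 0 <= w j), \sum_(j < k) w j = 1, (forall j, S (p j))
       & x = \sum_(j < k) w j *: p j]].

Definition newton_Gamma_plus (g : poly) : set 'rV[R]_n :=
  conv_hull [set x | exists2 m : mnm, m \in mpoly.msupp g &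
                 forall i, (m i)%:R <= x ord0 i].

Definition newton_face (S : set 'rV[R]_n) (P : 'I_n -> R) : set 'rV[R]_n :=
  [set x | S x /\ forall y, S y -> dotw P x <= dotw P y].

Definition newton_is_face (S F : set 'rV[R]_n) : Prop := exists P, F = newton_face S P.

Definition newton_Gamma (g : poly) : set 'rV[R]_n :=
  [set x | exists F, [/\ newton_is_face (newton_Gamma_plus g) F, compact F & F x]].

Definition affdim_ge (S : set 'rV[R]_n) (k : nat) : Prop :=
  exists p : 'I_k.+1 -> 'rV[R]_n, (forall j, S (p j)) /\
    row_free (\matrix_(j < k) (p (lift ord0 j) - p ord0)).

Definition affdim_eq (S : set 'rV[R]_n) (k : nat) : Prop :=
  affdim_ge S k /\ ~ affdim_ge S k.+1.

Definition newton_face_fun (g : poly) (P : 'I_n -> R) : poly :=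
  \sum_(m <- mpoly.msupp g | `[< newton_face (newton_Gamma_plus g) P (expv m) >])
     mpoly.mcoeff m g *: mpoly.mpolyX C m.

Definition newton_nondegenerate (f : poly) : Prop :=
  forall P : 'I_n -> R, (forall i, 0 < P i) ->
    ~ exists z : 'I_n -> C, (forall i, z i != 0) /\
        forall i, mpoly.meval z (mpoly.mderiv i (newton_face_fun f P)) = 0.

Definition isolated_sing_at0 (f : poly) : Prop :=
  (forall i, grad_at f (fun _ => 0) i = 0) /\
  exists e : R, 0 < e /\ forall z, 0 < cvec_norm z < e -> exists i, grad_at f z i != 0.

Definition vanishes_on_coord (I : {set 'I_n}) (f : poly) : Prop :=
  forall z : 'I_n -> C, (forall k, k \notin I -> z k = 0) -> mpoly.meval z f = 0.

Definition coord_restr (I : {set 'I_n}) (g : poly) : poly :=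
  \sum_(m <- mpoly.msupp g | [forall k, (k \notin I) ==> (m k == 0%N)])
     mpoly.mcoeff m g *: mpoly.mpolyX C m.

Definition J_set (f : poly) (I : {set 'I_n}) (i j : 'I_n) : Prop :=
  j \notin I /\ exists2 m : mnm, m \in mpoly.msupp f &
    [/\ (1 <= m i)%N, m j = 1%N & forall k, k != i -> k != j -> m k = 0%N].

Definition loj_nondegenerate (f : poly) : Prop :=
  forall I : {set 'I_n}, I != finset.set0 -> vanishes_on_coord I f ->
  forall P : 'I_n -> R, (forall i, i \in I -> 0 < P i) ->
  forall a : 'I_n -> C, (forall i, i \in I -> a i != 0) ->
  exists j : 'I_n,
    (exists i, [/\ i \in I, (forall k, k \in I -> P i <= P k) & J_set f I i j]) /\
    mpoly.meval a (newton_face_fun (coord_restr I (mpoly.mderiv j f))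
                            (fun k => if k \in I then P k else 0)) != 0.

Definition loj_set (f : poly) : set R :=
  [set theta | 0 < theta /\ exists c : R, 0 < c /\ exists delta : R, 0 < delta /\
     forall z, cvec_norm z < delta -> c * (cvec_norm z `^ theta) <= gnorm f z].

Definition ell0_loj (f : poly) : \bar R := ereal_inf (EFin @` loj_set f).

End Defs.

From Pilot Require Import Defs.
From HB Require Import structures.
From mathcomp Require Import all_boot all_order all_algebra.
From mathcomp Require Import mpoly.
From mathcomp Require Import all_classical all_reals all_analysis.
From mathcomp Require Import complex.
From mathcomp Require Import ring lra.
Set Implicit Arguments. Unset Strict Implicit. Unset Printing Implicit Defensive.
Import Order.TTheory GRing.Theory Num.Theory.
Import numFieldNormedType.Exports.
Local Open Scope classical_set_scope.
Local Open Scope ring_scope.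

(* Weighted homogeneity makes the gradient equivariant under the weighted
   action t.z = (t^{r_i} z_i):  grad_i f (t.z) = t^{d - r_i} grad_i f (z).
   Every z in the unit ball is t.w with 0 < t <= 1 and w on the boundary of the
   unit polydisc.  That boundary is compact and, the singularity being isolated,
   grad f has no zero on it, so |grad f (t.w)| >= c t^{d - rmin}; together with
   |t.w| <= sqrt n t^{rmin} this gives |grad f z| >= c' |z|^{d/rmin - 1}. *)

Section ReIm_continuity.
Variables (R : realType) (T : topologicalType).
Local Notation C := R[i].

Definition ReIm_continuous (h : T -> C) : Prop :=
  continuous (fun x => complex.Re (h x)) /\ continuous (fun x => complex.Im (h x)).

Lemma ReIm_continuous_cst (c : C) : ReIm_continuous (fun=> c).
Proof. by split=> x; exact: cst_continuous. Qed.

Lemma ReIm_continuousD (h g : T -> C) :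
  ReIm_continuous h -> ReIm_continuous g -> ReIm_continuous (fun x => h x + g x).
Proof.
move=> [hRe hIm] [gRe gIm]; split=> x.
- have -> : (fun x => complex.Re (h x + g x)) =
            (fun x => complex.Re (h x) + complex.Re (g x)).
    by apply/funext => y; case: (h y) => ? ?; case: (g y).
  exact: (continuousD (hRe x) (gRe x)).
- have -> : (fun x => complex.Im (h x + g x)) =
            (fun x => complex.Im (h x) + complex.Im (g x)).
    by apply/funext => y; case: (h y) => ? ?; case: (g y).
  exact: (continuousD (hIm x) (gIm x)).
Qed.

Lemma ReIm_continuousM (h g : T -> C) :
  ReIm_continuous h -> ReIm_continuous g -> ReIm_continuous (fun x => h x * g x).
Proof.
move=> [hRe hIm] [gRe gIm]; split=> x.
- have -> : (fun x => complex.Re (h x * g x)) =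
            (fun x => complex.Re (h x) * complex.Re (g x) -
                      complex.Im (h x) * complex.Im (g x)).
    by apply/funext => y; case: (h y) => ? ?; case: (g y).
  exact: (continuousB (continuousM (hRe x) (gRe x)) (continuousM (hIm x) (gIm x))).
- have -> : (fun x => complex.Im (h x * g x)) =
            (fun x => complex.Re (h x) * complex.Im (g x) +
                      complex.Im (h x) * complex.Re (g x)).
    by apply/funext => y; case: (h y) => ? ?; case: (g y).
  exact: (continuousD (continuousM (hRe x) (gIm x)) (continuousM (hIm x) (gRe x))).
Qed.

Lemma ReIm_continuous_sum (I : Type) (s : seq I) (F : I -> T -> C) :
  (forall i, ReIm_continuous (F i)) -> ReIm_continuous (fun x => \sum_(i <- s) F i x).
Proof.
move=> F_cont; rewrite -fct_sumE.
by elim/big_ind: _ => //; [exact: ReIm_continuous_cst | exact: ReIm_continuousD].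
Qed.

Lemma ReIm_continuous_prod (I : Type) (s : seq I) (F : I -> T -> C) :
  (forall i, ReIm_continuous (F i)) -> ReIm_continuous (fun x => \prod_(i <- s) F i x).
Proof.
move=> F_cont; rewrite -fct_prodE.
by elim/big_ind: _ => //; [exact: ReIm_continuous_cst | exact: ReIm_continuousM].
Qed.

Lemma ReIm_continuous_meval (n : nat) (v : T -> 'I_n -> C) (p : mpoly.mpoly n C) :
  (forall i, ReIm_continuous (fun x => v x i)) ->
  ReIm_continuous (fun x => mpoly.meval (v x) p).
Proof.
move=> v_cont; under [fun x => _]funext => x do rewrite mpoly.mevalE.
apply: ReIm_continuous_sum => m; apply: ReIm_continuousM; first exact: ReIm_continuous_cst.
apply: ReIm_continuous_prod => i.
have -> : (fun x => v x i ^+ m i) = (fun x => \prod_(k < m i) v x i).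
  by apply/funext => x; rewrite prodr_const card_ord.
exact: ReIm_continuous_prod.
Qed.

End ReIm_continuity.

Section squared_modulus.
Variable R : rcfType.
Local Notation C := R[i].

Definition sqmod (z : C) : R := complex.Re z ^+ 2 + complex.Im z ^+ 2.

Lemma sqmod_ge0 (z : C) : 0 <= sqmod z.
Proof. by rewrite addr_ge0 ?sqr_ge0. Qed.

Lemma sqmod_gt0 (z : C) : z != 0 -> 0 < sqmod z.
Proof.
case: z => a b z_neq0; rewrite lt_def sqmod_ge0 andbT.
apply: contraNneq z_neq0; rewrite /sqmod /= => /eqP.
by rewrite paddr_eq0 ?sqr_ge0 // !sqrf_eq0 => /andP[/eqP-> /eqP->].
Qed.

Lemma sqmod_realM (x : R) (z : C) : sqmod ((x%:C)%C * z) = x ^+ 2 * sqmod z.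
Proof. by case: z => a b; rewrite /sqmod /=; ring. Qed.

Lemma sqmod_le_sum (n : nat) (z : 'I_n -> C) (i : 'I_n) :
  sqmod (z i) <= \sum_(j < n) sqmod (z j).
Proof. by rewrite (bigD1 i) //= lerDl sumr_ge0 // => j _; exact: sqmod_ge0. Qed.

End squared_modulus.

Lemma sqmod_continuous (R : realType) (T : topologicalType) (h : T -> R[i]) :
  ReIm_continuous h -> continuous (fun x => sqmod (h x)).
Proof.
move=> [hRe hIm] x.
exact: (continuousD (continuousM (hRe x) (hRe x)) (continuousM (hIm x) (hIm x))).
Qed.

Lemma cvec_normE (R : realType) (n : nat) (z : 'I_n -> R[i]) :
  cvec_norm z = Num.sqrt (\sum_(i < n) sqmod (z i)).
Proof. by []. Qed.

Lemma gnormE (R : realType) (n : nat) (f : mpoly.mpoly n R[i]) (z : 'I_n -> R[i]) :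
  Defs.gnorm f z = Num.sqrt (\sum_(i < n) sqmod (grad_at f z i)).
Proof. by []. Qed.

Section powR_facts.
Variable R : realType.

Lemma powR_sum (t : R) (I : Type) (s : seq I) (b : I -> R) : 0 < t ->
  t `^ (\sum_(i <- s) b i) = \prod_(i <- s) t `^ b i.
Proof.
move=> t_gt0; elim: s => [|a s IHs]; first by rewrite !big_nil powRr0.
by rewrite !big_cons powRD ?IHs // lt0r_neq0 ?implybT.
Qed.

Lemma powR_le1 (a p : R) : 0 <= a <= 1 -> 0 <= p -> a `^ p <= 1.
Proof.
move=> /andP[a_ge0 a_le1] p_ge0; suff : a `^ p <= 1 `^ p by rewrite powR1.
by apply: ge0_ler_powR; rewrite ?nnegrE.
Qed.

End powR_facts.

Section weighted_scaling.
Variables (R : realType) (n : nat).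
Local Notation C := R[i].
Local Notation poly := (mpoly.mpoly n C).

Definition wscale (r : 'I_n -> R) (t : R) (z : 'I_n -> C) : 'I_n -> C :=
  fun i => ((t `^ r i)%:C)%C * z i.

Lemma meval_wscale (r : 'I_n -> R) (e t : R) (g : poly) (z : 'I_n -> C) :
  0 < t -> weighted_homogeneous r e g ->
  mpoly.meval (wscale r t z) g = ((t `^ e)%:C)%C * mpoly.meval z g.
Proof.
move=> t_gt0 g_whom; rewrite !mpoly.mevalE mulr_sumr; apply: eq_big_seq => m m_supp.
rewrite mulrCA; congr (_ * _).
under eq_bigr => i _ do rewrite /wscale exprMn.
rewrite big_split /=; congr (_ * _).
under eq_bigr => i _ do rewrite -rmorphXn -powR_mulrn ?powR_ge0 // -powRrM.
by rewrite -rmorph_prod -powR_sum // (g_whom m m_supp).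
Qed.

Lemma weighted_homogeneous_mderiv (r : 'I_n -> R) (e : R) (g : poly) (i : 'I_n) :
  weighted_homogeneous r e g -> weighted_homogeneous r (e - r i) (mpoly.mderiv i g).
Proof.
move=> g_whom m; rewrite mpoly.mcoeff_msupp mpoly.mcoeff_deriv => m_supp.
have /g_whom : (m + mpoly.mnm1 i)%MM \in mpoly.msupp g.
  by rewrite mpoly.mcoeff_msupp; apply: contraNneq m_supp => ->; rewrite mul0rn.
under eq_bigr => j _ do rewrite mpoly.mnmDE mpoly.mnm1E natrD mulrDr.
rewrite big_split /= => <-.
suff -> : \sum_(j < n) r j * (i == j)%:R = r i by rewrite addrK.
rewrite (bigD1 i) //= eqxx mulr1 big1 ?addr0 // => j.
by rewrite eq_sym => /negbTE ->; rewrite mulr0.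
Qed.

Lemma grad_at_wscale (r : 'I_n -> R) (d t : R) (f : poly) (z : 'I_n -> C) (i : 'I_n) :
  weighted_homogeneous r d f -> 0 < t ->
  grad_at f (wscale r t z) i = ((t `^ (d - r i))%:C)%C * grad_at f z i.
Proof.
move=> f_whom t_gt0.
by rewrite /grad_at (meval_wscale _ t_gt0 (weighted_homogeneous_mderiv (i := i) f_whom)).
Qed.

End weighted_scaling.

Section polydisc_boundary.
Variables (R : realType) (n : nat).
Local Notation C := R[i].

Definition polydisc_boundary : set ('I_n -> C) :=
  [set w | (forall i, sqmod (w i) <= 1) /\ exists i, sqmod (w i) = 1].

Lemma polydisc_boundary_delta (i : 'I_n) : polydisc_boundary (fun j => (j == i)%:R).
Proof.
split; last by exists i; rewrite eqxx /sqmod /= expr1n expr0n addr0.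
by move=> j; case: (j == i); rewrite /sqmod /= ?expr1n expr0n ?addr0 ?ler01.
Qed.

(* C^n is identified with R^n x R^n (real and imaginary parts) to borrow the
   topology of real row vectors. *)
Definition cvec_of_pair (x : 'rV[R]_n * 'rV[R]_n) : 'I_n -> C :=
  fun i => (x.1 ord0 i +i* x.2 ord0 i)%C.

Definition pair_of_cvec (w : 'I_n -> C) : 'rV[R]_n * 'rV[R]_n :=
  (\row_i complex.Re (w i), \row_i complex.Im (w i)).

Lemma pair_of_cvecK : cancel pair_of_cvec cvec_of_pair.
Proof. by move=> w; apply/funext => i; rewrite /cvec_of_pair !mxE; case: (w i). Qed.

Lemma cvec_of_pair_continuous (i : 'I_n) : ReIm_continuous (fun x => cvec_of_pair x i).
Proof.
split=> x.
- apply: (@continuous_comp _ _ _ fst (fun v : 'rV[R]_n => v ord0 i)).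
    exact: cvg_fst.
  exact: coord_continuous.
- apply: (@continuous_comp _ _ _ snd (fun v : 'rV[R]_n => v ord0 i)).
    exact: cvg_snd.
  exact: coord_continuous.
Qed.

Lemma polydisc_boundary_compact : compact (cvec_of_pair @^-1` polydisc_boundary).
Proof.
pose sqmod_at i x := sqmod (cvec_of_pair x i).
have sqmod_at_closed i : forall A : set R, closed A -> closed (sqmod_at i @^-1` A).
  exact/continuous_closedP/sqmod_continuous/cvec_of_pair_continuous.
have -> : cvec_of_pair @^-1` polydisc_boundary =
    \bigcap_(i in setT) sqmod_at i @^-1` [set y | y <= 1] `&`
    \bigcup_(i in setT) sqmod_at i @^-1` [set 1].
  apply/seteqP; split=> x /=.
    by move=> [x_le1 [i x_eq1]]; split=> [j _|]; [exact: x_le1 | exists i].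
  by move=> [x_le1 [i _ x_eq1]]; split=> [j|]; [exact: x_le1 | exists i].
pose square := [set v : 'rV[R]_n | forall i, (fun=> `[-1, 1]%classic) i (v ord0 i)].
have square_compact : compact square by apply: rV_compact => i; exact: segment_compact.
apply: (@subclosed_compact _ _ (square `*` square)).
- apply: closedI.
    by apply: closed_bigI => i _; apply: sqmod_at_closed; exact: closed_le.
  apply: closed_bigcup => [|i _]; first exact: finite_finset.
  by apply: sqmod_at_closed; exact: closed_eq.
- exact: compact_setX.
move=> x [x_le1 _]; split=> i /=; have := x_le1 i I;
  rewrite /sqmod_at /sqmod /= in_itv /= => x_i_le1.
- have := sqr_ge0 (x.2 ord0 i) => ?; apply/andP; split; nra.
- have := sqr_ge0 (x.1 ord0 i) => ?; apply/andP; split; nra.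
Qed.

Lemma polydisc_boundary_EVT_min (G : ('I_n -> C) -> R) :
  (0 < n)%N -> continuous (G \o cvec_of_pair) ->
  exists2 c, polydisc_boundary c & forall w, polydisc_boundary w -> G c <= G w.
Proof.
move=> n_gt0 G_cont.
have nonempty : cvec_of_pair @^-1` polydisc_boundary !=set0.
  exists (pair_of_cvec (fun j => (j == Ordinal n_gt0)%:R)).
  by rewrite /preimage /= pair_of_cvecK; exact: polydisc_boundary_delta.
have [c c_in c_min] := compact_EVT_min nonempty polydisc_boundary_compact
  (continuous_subspaceT G_cont).
exists (cvec_of_pair c); first by move: c_in; rewrite inE.
move=> w w_in; rewrite -(pair_of_cvecK w); apply: c_min.
by rewrite inE /preimage /= pair_of_cvecK.
Qed.

End polydisc_boundary.

Section weighted_polydisc.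
Variables (R : realType) (n : nat) (r : 'I_n -> R).
Hypothesis r_gt0 : forall i, 0 < r i.
Local Notation C := R[i].
Local Notation rmin := (min_weight_r r).

Lemma min_weight_le (i : 'I_n) : rmin <= r i.
Proof. exact: bigmin_le. Qed.

Lemma min_weight_gt0 : (0 < n)%N -> 0 < rmin.
Proof.
move=> n_gt0; apply/bigmin_gtP; split=> [|i _]; last exact: r_gt0.
exact: lt_le_trans (r_gt0 (Ordinal n_gt0)) (le_bigmax _ _ _).
Qed.

Lemma cvec_norm_wscale_le (t : R) (w : 'I_n -> C) :
  0 < t <= 1 -> (forall i, sqmod (w i) <= 1) ->
  cvec_norm (wscale r t w) <= Num.sqrt n%:R * t `^ rmin.
Proof.
move=> t01 w_le1; rewrite cvec_normE.
have -> : Num.sqrt n%:R * t `^ rmin = Num.sqrt (\sum_(i < n) (t `^ rmin) ^+ 2).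
  rewrite sumr_const card_ord -[in RHS]mulr_natr sqrtrM ?sqr_ge0 // sqrtr_sqr.
  by rewrite ger0_norm ?powR_ge0 // mulrC.
apply: ler_wsqrtr; apply: ler_sum => i _; rewrite sqmod_realM.
have : t `^ r i <= t `^ rmin by apply: ger_powR => //; exact: min_weight_le.
have := powR_ge0 t (r i); have := w_le1 i; have := sqmod_ge0 (w i); nra.
Qed.

Lemma wscale_polydisc_boundary (z : 'I_n -> C) :
  (forall i, sqmod (z i) <= 1) -> (exists i, z i != 0) ->
  exists t w, [/\ 0 < t <= 1, polydisc_boundary w & z = wscale r t w].
Proof.
move=> z_le1 [i1 z_i1_neq0].
pose b i := sqmod (z i) `^ (2 * r i)^-1. (* |z_i|^{1/r_i}; t is their maximum *)
pose t := \big[Num.max/0]_(i < n) b i.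
have [i0 _ t_eq] := @eq_bigmax _ _ _ 0 i1 predT b isT (fun i _ => powR_ge0 _ _).
have t_gt0 : 0 < t by apply: lt_le_trans (le_bigmax _ b i1); exact/powR_gt0/sqmod_gt0.
have t_le1 : t <= 1.
  rewrite [t]t_eq powR_le1 ?sqmod_ge0 ?z_le1 // invr_ge0 mulr_ge0 //; exact: ltW.
have tr_gt0 i : 0 < t `^ r i by exact: powR_gt0.
have b_pow i : b i `^ (2 * r i) = sqmod (z i).
  by rewrite -powRrM mulVf ?powRr1 ?sqmod_ge0 // gt_eqF // mulr_gt0.
have t_pow i : t `^ (2 * r i) = (t `^ r i) ^+ 2.
  by rewrite mulrC powRrM powR_mulrn // powR_ge0.
have z_le_t i : sqmod (z i) <= (t `^ r i) ^+ 2.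
  rewrite -b_pow -t_pow; apply: ge0_ler_powR; rewrite ?nnegrE ?powR_ge0 ?(ltW t_gt0) //.
    by rewrite mulr_ge0 // ltW.
  exact: le_bigmax _ b i.
have z_i0_eq : sqmod (z i0) = (t `^ r i0) ^+ 2 by rewrite -t_pow [t]t_eq b_pow.
pose w i := (((t `^ r i)^-1)%:C)%C * z i.
have sqmod_w i : sqmod (w i) = sqmod (z i) / (t `^ r i) ^+ 2.
  by rewrite sqmod_realM exprVn mulrC.
exists t, w; split.
- by rewrite t_gt0 t_le1.
- split=> [i|]; last by exists i0; rewrite sqmod_w z_i0_eq divff // expf_neq0 // gt_eqF.
  by rewrite sqmod_w ler_pdivrMr ?exprn_gt0 // mul1r.
- apply/funext => i; rewrite /wscale /w mulrA -rmorphM divff ?rmorph1 ?mul1r //.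
  exact: lt0r_neq0.
Qed.

End weighted_polydisc.

Section weighted_homogeneous_gradient.
Variables (R : realType) (n : nat) (r : 'I_n -> R) (d : R) (f : mpoly.mpoly n R[i]).
Hypotheses (r_gt0 : forall i, 0 < r i) (n_gt0 : (0 < n)%N).
Hypotheses (f_whom : weighted_homogeneous r d f) (f_isolated : isolated_sing_at0 f).
Local Notation C := R[i].
Local Notation rmin := (min_weight_r r).
Local Notation eta := (d / rmin - 1).

Lemma grad_neq0_on_polydisc_boundary (w : 'I_n -> C) :
  polydisc_boundary w -> exists i, grad_at f w i != 0.
Proof.
move=> [w_le1 [i1 w_i1]]; have [_ [e [e_gt0 grad_neq0]]] := f_isolated.
pose sN := Num.sqrt (n%:R : R); have sN_ge0 : 0 <= sN := sqrtr_ge0 _.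
pose u := Num.min 1 (e / (sN + 1)).
have u_gt0 : 0 < u by rewrite lt_min ltr01 divr_gt0 // ltr_wpDl.
have sN_u_lt_e : sN * u < e.
  have : u * (sN + 1) <= e by rewrite -ler_pdivlMr ?ge_min ?lexx ?orbT // ltr_wpDl.
  nra.
(* s.w lies in the punctured e-ball, where grad f does not vanish. *)
pose s := u `^ rmin^-1.
have s_gt0 : 0 < s by exact: powR_gt0.
have rmin_gt0 := min_weight_gt0 r_gt0 n_gt0.
have s_le1 : s <= 1.
  by rewrite powR_le1 ?ge_min ?lexx ?invr_ge0 ?(ltW u_gt0) ?(ltW rmin_gt0).
have s_rmin : s `^ rmin = u by rewrite -powRrM mulVf ?powRr1 ?(ltW u_gt0) // gt_eqF.
have [|i] := grad_neq0 (wscale r s w).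
  apply/andP; split.
    rewrite cvec_normE sqrtr_gt0; apply: lt_le_trans (sqmod_le_sum _ i1).
    by rewrite sqmod_realM w_i1 mulr1 exprn_gt0 // powR_gt0.
  apply: le_lt_trans (cvec_norm_wscale_le r _ w_le1) _; first by rewrite s_gt0 s_le1.
  by rewrite s_rmin.
by rewrite (grad_at_wscale _ _ f_whom s_gt0) mulf_eq0 negb_or => /andP[_ ?]; exists i.
Qed.

Lemma min_weight_lt_degree : rmin < d.
Proof.
pose delta j : C := (j == Ordinal n_gt0)%:R.
have [i grad_i_neq0] :=
  grad_neq0_on_polydisc_boundary (polydisc_boundary_delta R (Ordinal n_gt0)).
suff : rmin <= d - r i by have := r_gt0 i; lra.
(* Otherwise no monomial of weighted degree d - r_i has a nonzero exponent, so
   f_i is constant, equal to f_i(0) = 0. *)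
rewrite leNgt; apply/negP => deg_lt.
have deriv_const m : m \in mpoly.msupp (mpoly.mderiv i f) -> forall j, m j = 0%N.
  move=> m_supp j; apply/eqP; rewrite -leqn0 leqNgt; apply/negP => m_j_gt0.
  have := weighted_homogeneous_mderiv (i := i) f_whom m_supp.
  rewrite (bigD1 j) //= => deg_m.
  have : r j <= r j * (m j)%:R by rewrite ler_peMr ?ler1n // ltW.
  have : r j * (m j)%:R <= d - r i.
    by rewrite -deg_m lerDl sumr_ge0 // => k _; rewrite mulr_ge0 ?ler0n // ltW.
  have := min_weight_le r j; lra.
have meval_indep v v' :
    mpoly.meval v (mpoly.mderiv i f) = mpoly.meval v' (mpoly.mderiv i f).
  rewrite !mpoly.mevalE; apply: eq_big_seq => m m_supp; congr (_ * _).
  by apply: eq_bigr => j _; rewrite deriv_const.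
have := f_isolated.1 i; rewrite /grad_at (meval_indep _ delta) => grad_i_eq0.
by rewrite /grad_at grad_i_eq0 eqxx in grad_i_neq0.
Qed.

Lemma gnorm_bounded_below_on_polydisc_boundary :
  exists2 c, 0 < c & forall w, polydisc_boundary w -> c <= Defs.gnorm f w.
Proof.
pose G w := \sum_(i < n) sqmod (grad_at f w i).
have G_cont : continuous (fun x => G (cvec_of_pair x)).
  rewrite /G -fct_sumE; elim/big_ind: _ => [x|g h g_cont h_cont x|i _].
  - exact: cst_continuous.
  - exact: continuousD (g_cont x) (h_cont x).
  - by apply/sqmod_continuous/ReIm_continuous_meval; exact: cvec_of_pair_continuous.
have [c c_bd c_min] := polydisc_boundary_EVT_min n_gt0 G_cont.
have [i grad_i_neq0] := grad_neq0_on_polydisc_boundary c_bd.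
exists (Num.sqrt (G c)).
  by rewrite sqrtr_gt0; apply: lt_le_trans (sqmod_le_sum _ i); exact: sqmod_gt0.
by move=> w w_bd; rewrite gnormE ler_wsqrtr // c_min.
Qed.

Lemma gnorm_wscale_ge (t : R) (w : 'I_n -> C) : 0 < t <= 1 ->
  t `^ (d - rmin) * Defs.gnorm f w <= Defs.gnorm f (wscale r t w).
Proof.
move=> /andP[t_gt0 t_le1]; rewrite !gnormE.
rewrite -[t `^ _]ger0_norm ?powR_ge0 // -sqrtr_sqr -sqrtrM ?sqr_ge0 // mulr_sumr.
apply: ler_wsqrtr; apply: ler_sum => i _.
rewrite (grad_at_wscale _ _ f_whom t_gt0) sqmod_realM.
apply: ler_wpM2r; first exact: sqmod_ge0.
have : t `^ (d - rmin) <= t `^ (d - r i).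
  by apply: ger_powR; [rewrite t_gt0 | have := min_weight_le r i; lra].
have := powR_ge0 t (d - rmin); nra.
Qed.

Lemma weighted_exponent_gt0 : 0 < eta.
Proof.
by rewrite subr_gt0 ltr_pdivlMr ?mul1r ?min_weight_lt_degree ?min_weight_gt0.
Qed.

Lemma weighted_exponent_in_loj_set : loj_set f eta.
Proof.
have rmin_gt0 := min_weight_gt0 r_gt0 n_gt0.
have rmin_eta : rmin * eta = d - rmin.
  by rewrite mulrBr mulr1 mulrCA divff ?mulr1 // gt_eqF.
have [c c_gt0 c_le_gnorm] := gnorm_bounded_below_on_polydisc_boundary.
pose sN := Num.sqrt (n%:R : R).
have sN_eta_gt0 : 0 < sN `^ eta by rewrite powR_gt0 // sqrtr_gt0 ltr0n.
split; first exact: weighted_exponent_gt0.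
exists (c / sN `^ eta); split; first by rewrite divr_gt0.
exists 1; split=> // z z_lt1.
have [z_eq0|z_neq0] := eqVneq (cvec_norm z) 0.
  by rewrite z_eq0 powR0 ?gt_eqF ?weighted_exponent_gt0 // mulr0 sqrtr_ge0.
have z_le1 i : sqmod (z i) <= 1.
  apply: le_trans (sqmod_le_sum z i) (ltW _).
  by move: z_lt1; rewrite cvec_normE -[X in _ < X]sqrtr1 ltr_sqrt.
have [i z_i_neq0] : exists i, z i != 0.
  apply/existsP; apply: contraNT z_neq0; rewrite negb_exists => /forallP z_eq0.
  rewrite cvec_normE big1 ?sqrtr0 // => i _.
  by rewrite (eqP (negbNE (z_eq0 i))) /sqmod /= expr0n addr0.
have [t [w [t01 w_bd ->]]] :=
  wscale_polydisc_boundary r_gt0 z_le1 (ex_intro _ i z_i_neq0).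
have norm_pow_le : cvec_norm (wscale r t w) `^ eta <= sN `^ eta * t `^ (d - rmin).
  rewrite -rmin_eta powRrM -powRM ?powR_ge0 ?sqrtr_ge0 //.
  apply: ge0_ler_powR; rewrite ?nnegrE ?mulr_ge0 ?powR_ge0 ?sqrtr_ge0 //.
    exact/ltW/weighted_exponent_gt0.
  exact: cvec_norm_wscale_le w_bd.1.
apply: le_trans _ (gnorm_wscale_ge w t01).
apply: le_trans (ler_wpM2l (ltW (divr_gt0 c_gt0 sN_eta_gt0)) norm_pow_le) _.
rewrite mulrA divfK ?gt_eqF // mulrC.
by apply: ler_wpM2l; [exact: powR_ge0 | exact: c_le_gnorm].
Qed.

End weighted_homogeneous_gradient.

(* For n = 0 the empty point is a critical point in (C^* )^0 of every face function. *)
Lemma newton_nondegenerate_dim_gt0 (R : realType) (n : nat) (f : mpoly.mpoly n R[i]) :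
  newton_nondegenerate f -> (0 < n)%N.
Proof.
case: n f => // f f_nondeg; exfalso.
by apply: (f_nondeg (fun=> 1)) => [[]|] //; exists (fun=> 0); split=> -[].
Qed.

Local Close Scope classical_set_scope.

Theorem theorem19 (R : realType) (n : nat) (f : mpoly.mpoly n R[i])
    (r : 'I_n -> R) (d : R) :
  (forall i, 0 < r i) -> 0 < d ->
  weighted_homogeneous r d f ->
  newton_nondegenerate f ->
  loj_nondegenerate f ->
  isolated_sing_at0 f ->
  affdim_eq (newton_Gamma f) n.-1 ->
  (ell0_loj f <= (d / min_weight_r r - 1)%:E)%E.
Proof.
move=> r_gt0 _ f_whom f_nondeg _ f_isolated _.
have n_gt0 := newton_nondegenerate_dim_gt0 f_nondeg.
apply: ereal_inf_lbound; exists (d / min_weight_r r - 1) => //.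
exact: weighted_exponent_in_loj_set.
Qed.
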